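(* Let $k$ be a field, $Q=(Q_0,Q_1)$ a quiver, and $\widehat{T}_{\Sigma}(V)$ the associated complete tensor algebra (complete path algebra). Let $G$ be a homogeneous group of continuous algebra automorphisms of $\widehat{T}_{\Sigma}(V)$ which is invariant on $\Sigma$. Let $\omega$ be any space of path of length $m\ge1$, and fix, for every subpath $\omega'$ of $\omega$, a space of irreducible invariants $V^G_{\omega',\mathrm{irr}}$. Then the canonical map $$\psi_{\omega}:\bigoplus_{p} V^G_{\omega,p,\mathrm{irr}}\longrightarrow V^G_{\omega},$$ where $p$ runs through all ordered partitions of $m$, is bijective.
   Context: $k$ is a discrete topological field. For $i,j\in Q_0$, $VQ_{i,j}$ is the $k$-vector space spanned by the arrows of $Q$ from $i$ to $j$. $\Sigma=\prod_{i\in Q_0}ke_i$, $V=\prod_{i,j\in Q_0}VQ_{i,j}$ (a pseudocompact $\Sigma$-bimodule), $V^{\widehat{\otimes}_0}=\Sigma$, $V^{\widehat{\otimes}_n}=V\widehat{\otimes}_{\Sigma}V^{\widehat{\otimes}_{n-1}}$ (completed tensor product over $\Sigma$), and $\widehat{T}_{\Sigma}(V)=\prod_{n\ge0}V^{\widehat{\otimes}_n}$ with the product topology and multiplication given by the completed tensor product. A continuous algebra automorphism $g$ is homogeneous if $g(V^{\widehat{\otimes}_n})=V^{\widehat{\otimes}_n}$ for all $n\in\mathbb{N}$; a group is homogeneous if all its elements are. $G$ is invariant on $\Sigma$ means every element of $G$ acts as the identity on $\Sigma$; then each $V^{\widehat{\otimes}_n}$ is a $kG$-module and $G$ preserves the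 subspaces below. For a $G$-stable subspace $W$, $W^G$ denotes the fixed points. An arrow space is a nonzero $V_a=VQ_{i,j}$. For a sequence of arrow spaces $V_{a_1},\dots,V_{a_m}$ with $V_{a_n}=VQ_{i_{n-1},i_n}$, $V_\omega=V_{a_m}\widehat{\otimes}_\Sigma\cdots\widehat{\otimes}_\Sigma V_{a_1}\subseteq V^{\widehat{\otimes}_m}$ is a space of path $\omega$ from $i_0$ to $i_m$ of length $m$; spaces of the form $V_{a_t}\widehat{\otimes}_\Sigma\cdots\widehat{\otimes}_\Sigma V_{a_s}$ are its subpaths. A 2-partition $\omega=\omega_2\omega_1$ is a pair of subpaths with $V_\omega=V_{\omega_2}\widehat{\otimes}_\Sigma V_{\omega_1}$; $\varphi_{\omega_1,\omega_2}:V^G_{\omega_2}\widehat{\otimes}_\Sigma V^G_{\omega_1}\to V^G_\omega$ is the canonical map, and $\varphi_\omega=\sum_{\omega_2\omega_1=\omega}\varphi_{\omega_1,\omega_2}$. The image of $\varphi_\omega$ is the space of composite invariants; a space of irreducible invariants $V^G_{\omega,\mathrm{irr}}$ is any fixed complement of $\mathrm{Im}\,\varphi_\omega$ in $V^G_\omega$. For an ordered partition $p=(m_l,\dots,m_1)$ of $m$ into positive integers, write $\omega=\omega_{m_l}\cdots\omega_{m_1}$ with $\omega_{m_t}$ the unique subpath of length $m_t$ in this position, and set $V^G_{\omega,p,\mathrm{irr}}=V^G_{\omega_{m_l},\mathrm{irr}}\widehat{\otimes}_\Sigma\cdots\widehat{\otimes}_\Sigma V^G_{\omega_{m_1},\mathrm{irr}}$.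 The map $\psi_\omega$ is the sum of the canonical (multiplication) maps $V^G_{\omega,p,\mathrm{irr}}\to V^G_\omega$. *)

From HB Require Import structures.
From mathcomp Require Import all_boot all_order all_algebra.
From mathcomp Require Import mxtens.
From Stdlib Require Import ClassicalEpsilon.

Set Implicit Arguments.
Unset Strict Implicit.
Unset Printing Implicit Defensive.

Import GRing.Theory.
Local Open Scope ring_scope.

(*  - A quiver Q = (Q0,Q1) is given by its vertex type Q0 and, for i j : Q0,  *)
(*    the number  na i j  of arrows i -> j.  VQ_{i,j} = F^(na i j), with the  *)
(*    arrows as standard basis (elements are row vectors 'rV_(na i j)).       *)
(*  - A path space omega is given by its vertex sequence i_0, i_1, ..., i_m,  *)
(*    written (i0, [:: i_1; ...; i_m]).                                       *)
(*  - V_omega = V_{a_m} (x) ... (x) V_{a_1} is F^(Dim i0 l), the iterated     *)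
(*    Kronecker product (mxtens.tensmx, row-major indices), with              *)
(*    V_{(i, j :: l)} = V_{(j, l)} (x) VQ_{i,j}.                             *)
(*  - A homogeneous continuous algebra automorphism g of the complete path    *)
(*    algebra that is the identity on Sigma is the same thing as a family of        *)
(*    invertible linear maps g i j of VQ_{i,j} (its degree-one part); it acts *)
(*    on V_omega by the tensor product of these maps (act g).                 *)

Section Defs.

Variable F : fieldType.
Variable Q0 : Type.
Variable na : Q0 -> Q0 -> nat.

Definition arrow_family := forall i j : Q0, 'M[F]_(na i j).

Definition is_group (G : arrow_family -> Prop) : Prop :=
  [/\ G (fun i j => 1%:M),
      (forall g h, G g -> G h -> G (fun i j => g i j *m h i j)),
      (forall g, G g -> forall i j, g i j \in unitmx) &
      (forall g, G g -> G (fun i j => invmx (g i j)))].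

Definition is_arrow_path (i0 : Q0) (l : seq Q0) : bool :=
  path (fun a b => 0 < na a b)%N i0 l.

Fixpoint Dim (i : Q0) (l : seq Q0) : nat :=
  match l with
  | [::] => 1%N
  | j :: l' => (Dim j l' * na i j)%N
  end.

(* action of g on V_omega : v |-> v *m act g i l *)
Fixpoint act (g : arrow_family) (i : Q0) (l : seq Q0) : 'M[F]_(Dim i l) :=
  match l return 'M[F]_(Dim i l) with
  | [::] => 1%:M
  | j :: l' => tensmx (act g j l') (g i j)
  end.

Definition castcols (r a b : nat) (A : 'M[F]_(r, a)) : 'M[F]_(r, b) :=
  match a =P b with
  | ReflectT e => castmx (erefl r, e) A
  | ReflectF _ => 0
  end.

Definition subpath (i : Q0) (l : seq Q0) (i0 : Q0) (l0 : seq Q0) : Prop :=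
  exists s : nat, (s + size l <= size l0)%N /\
    i :: l = take (size l).+1 (drop s (i0 :: l0)).

Section Group.

Variable G : arrow_family -> Prop.

(* V^G_omega, as a (square) matrix whose row space is the fixed subspace *)
Definition fixmx (i : Q0) (l : seq Q0) : 'M[F]_(Dim i l) :=
  epsilon (inhabits 0) (fun M : 'M[F]_(Dim i l) =>
    forall v : 'rV[F]_(Dim i l),
      (v <= M)%MS <-> (forall g, G g -> v *m act g i l = v)).

(* the 2-partition of omega = (i, l) after the first n1 arrows:
   omega_1 = (i, take n1 l), omega_2 = (nth i (i :: l) n1, drop n1 l) *)
Definition cut_vertex (i : Q0) (l : seq Q0) (n1 : nat) : Q0 := nth i (i :: l) n1.

(* Im phi_omega : the space of composite invariants, i.e. the sum over the
   2-partitions omega = omega_2 omega_1 of the images of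
   V^G_{omega_2} (x) V^G_{omega_1} in V_omega *)
Definition compmx (i : Q0) (l : seq Q0) : 'M[F]_(Dim i l) :=
  (\sum_(1 <= n1 < size l)
     <<castcols (Dim i l)
         (tensmx (fixmx (cut_vertex i l n1) (drop n1 l)) (fixmx i (take n1 l)))>>)%MS.

(* W i l is a space of irreducible invariants: a complement of Im phi in V^G *)
Definition irr_space (W : forall (i : Q0) (l : seq Q0), 'M[F]_(Dim i l))
  (i : Q0) (l : seq Q0) : Prop :=
  ((W i l + compmx i l)%MS == fixmx i l)%MS /\ mxdirect (W i l + compmx i l).

(* ordered partitions of n into positive integers, listed from the start
   of the path (first entry = length of the first factor omega_{m_1}) *)
Fixpoint comps_aux (fuel n : nat) : seq (seq nat) :=
  if n is 0 then [:: [::]] else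
  if fuel is f.+1 then
    flatten [seq [seq k :: c | c <- comps_aux f (n - k)] | k <- iota 1 n]
  else [::].

Definition comps (n : nat) : seq (seq nat) := comps_aux n n.

Section Psi.

Variable W : forall (i : Q0) (l : seq Q0), 'M[F]_(Dim i l).

(* dimension of V^G_{omega,p,irr} = (x)_t W_{omega_{m_t}} *)
Fixpoint rb (p : seq nat) (i : Q0) (l : seq Q0) : nat :=
  match p with
  | [::] => 1%N
  | n1 :: p' => (rb p' (cut_vertex i l n1) (drop n1 l) * \rank (W i (take n1 l)))%N
  end.

(* the images under the multiplication map of the tensor-product basis of
   V^G_{omega,p,irr} (tensors of the row bases of the W's), one per row *)
Fixpoint blocksmx (p : seq nat) (i : Q0) (l : seq Q0) : 'M[F]_(rb p i l, Dim i l) :=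
  match p return 'M[F]_(rb p i l, Dim i l) with
  | [::] => castcols (Dim i l) (1%:M : 'M[F]_1)
  | n1 :: p' =>
      castcols (Dim i l)
        (tensmx (blocksmx p' (cut_vertex i l n1) (drop n1 l))
                (row_base (W i (take n1 l))))
  end.

Fixpoint rs (ps : seq (seq nat)) (i : Q0) (l : seq Q0) : nat :=
  match ps with
  | [::] => 0%N
  | p :: ps' => (rb p i l + rs ps' i l)%N
  end.

(* the matrix of psi_omega on the basis of the direct sum over partitions *)
Fixpoint stackmx (ps : seq (seq nat)) (i : Q0) (l : seq Q0) : 'M[F]_(rs ps i l, Dim i l) :=
  match ps return 'M[F]_(rs ps i l, Dim i l) with
  | [::] => 0
  | p :: ps' => col_mx (blocksmx p i l) (stackmx ps' i l)
  end.

Definition psi_dom_dim (i : Q0) (l : seq Q0) : nat := rs (comps (size l)) i l.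

Definition psi (i : Q0) (l : seq Q0) (x : 'rV[F]_(psi_dom_dim i l)) : 'rV[F]_(Dim i l) :=
  x *m stackmx (comps (size l)) i l.

Definition psi_bijective (i : Q0) (l : seq Q0) : Prop :=
  (forall x, (@psi i l x <= fixmx i l)%MS) /\
  (forall y : 'rV[F]_(Dim i l), (y <= fixmx i l)%MS ->
     exists! x, @psi i l x = y).

End Psi.
End Group.
End Defs.

(* Split a path omega of length m after its first k arrows, omega = omega''_k omega'_k
   (1 <= k <= m), and consider the spaces V^G_(omega''_k) (x) W_(omega'_k) inside V^G_omega.
   Their sum contains every composite invariant: V^G_(omega'_k) = W_(omega'_k) (+) Im phi, and
   reassociating V^G (x) (V^G (x) V^G) moves a composite term to a split with smaller k.
   With the term k = m, which is W_omega itself, they therefore span V^G_omega.  The sum is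
   direct: an invariant of V_(omega''_k) (x) (S (+) W_(omega'_k)), where S is spanned by the
   earlier terms, has an invariant W-component, because G fixes W_(omega'_k) pointwise,
   stabilises S, and W_(omega'_k) meets S trivially (inductively, the invariants in S are
   composite).  By induction on m, psi_(omega''_k) is a bijection onto V^G_(omega''_k), and the
   partitions with first part k contribute psi_(omega''_k) (x) (a basis of W_(omega'_k)). *)

From mathcomp Require Import all_boot all_algebra.
From mathcomp Require Import mxtens zify.
From Stdlib Require Import ClassicalEpsilon.

Set Implicit Arguments.
Unset Strict Implicit.
Unset Printing Implicit Defensive.
Import GRing.Theory.
Local Open Scope ring_scope.

Section Vectorization.
Variable R : comPzRingType.

(* Unlike [mxvec], this vectorization indexes through [mxtens_index], so that
   [mxtvec_mul] holds without casts. *)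
Definition mxtvec m n (M : 'M[R]_(m, n)) : 'rV[R]_(m * n) :=
  \row_k M (mxtens_unindex k).1 (mxtens_unindex k).2.

Definition tvec_mx m n (v : 'rV[R]_(m * n)) : 'M[R]_(m, n) :=
  \matrix_(i, j) v 0 (mxtens_index (i, j)).

Lemma mxtvecK m n : cancel (@mxtvec m n) (@tvec_mx m n).
Proof. by move=> M; apply/matrixP=> i j; rewrite !mxE mxtens_indexK. Qed.

Lemma tvec_mxK m n : cancel (@tvec_mx m n) (@mxtvec m n).
Proof.
move=> v; apply/matrixP=> i k; rewrite !mxE [i]ord1.
by rewrite -surjective_pairing mxtens_unindexK.
Qed.

Lemma mxtvec_inj m n : injective (@mxtvec m n).
Proof. exact: can_inj (@mxtvecK m n). Qed.

Lemma mxtvecD m n (A B : 'M[R]_(m, n)) : mxtvec (A + B) = mxtvec A + mxtvec B.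
Proof. by apply/matrixP=> i k; rewrite !mxE. Qed.

Lemma mxtvec_mul m n p q (A : 'M[R]_(m, p)) (Z : 'M[R]_(m, n)) (B : 'M[R]_(n, q)) :
  mxtvec (A^T *m Z *m B) = mxtvec Z *m (A *t B).
Proof.
apply/matrixP=> i0 k; rewrite [i0]ord1.
case: (mxtens_indexP k) => p0 q0.
rewrite [LHS]mxE mxtens_indexK /= [RHS]mxE (reindex (@mxtens_index m n)) /=; last first.
  by exists (@mxtens_unindex m n) => x _; rewrite (mxtens_indexK, mxtens_unindexK).
transitivity (\sum_i \sum_j mxtvec Z 0 (mxtens_index (i, j)) *
   (A *t B) (mxtens_index (i, j)) (mxtens_index (p0, q0))); last first.
  by rewrite pair_bigA; apply: eq_bigr => -[].
rewrite exchange_big mxE; apply: eq_bigr => j _; rewrite !mxE mulr_suml.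
apply: eq_bigr => i _.
by rewrite !mxE !mxtens_indexK /= mulrCA mulrA.
Qed.

Lemma tensmx11 m n : (1%:M : 'M[R]_m) *t (1%:M : 'M[R]_n) = 1%:M.
Proof.
apply/matrixP=> i j.
case: (mxtens_indexP i) => i1 i2; case: (mxtens_indexP j) => j1 j2.
rewrite tensmxE !mxE (inj_eq (can_inj (@mxtens_indexK m n))) xpair_eqE.
by case: (i1 == j1); case: (i2 == j2); rewrite ?mulr1 ?mulr0 ?mul0r.
Qed.

Lemma tensmxA m1 n1 m2 n2 m3 n3
    (A : 'M[R]_(m1, n1)) (B : 'M[R]_(m2, n2)) (C : 'M[R]_(m3, n3)) :
  A *t (B *t C) = castmx (esym (mulnA _ _ _), esym (mulnA _ _ _)) ((A *t B) *t C).
Proof.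
apply/matrixP=> i j.
case: (mxtens_indexP i) => i1 i23; case: (mxtens_indexP i23) => i2 i3.
case: (mxtens_indexP j) => j1 j23; case: (mxtens_indexP j23) => j2 j3.
rewrite castmxE !tensmxE.
have cast_index a b c (x : 'I_a) (y : 'I_b) (z : 'I_c) :
    cast_ord (esym (esym (mulnA a b c))) (mxtens_index (x, mxtens_index (y, z))) =
    mxtens_index (mxtens_index (x, y), z).
  by apply: val_inj => /=; rewrite mulnDl -mulnA addnA.
by rewrite !cast_index !tensmxE mulrA.
Qed.

Lemma tensmx_castl m m' n n' p q (e1 : m = m') (e2 : n = n') (A : 'M[R]_(m, n))
    (B : 'M[R]_(p, q)) :
  castmx (e1, e2) A *t B = castmx (congr1 (muln^~ p) e1, congr1 (muln^~ q) e2) (A *t B).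
Proof. by case: m' / e1; case: n' / e2; rewrite !castmx_id. Qed.

End Vectorization.

Section TensorSpaces.
Variable F : fieldType.

Lemma row_free_tensmx m n p q (A : 'M[F]_(m, n)) (B : 'M[F]_(p, q)) :
  row_free A -> row_free B -> row_free (A *t B).
Proof.
move=> /row_freeP[A' hA] /row_freeP[B' hB]; apply/row_freeP.
by exists (A' *t B'); rewrite tensmx_mul hA hB tensmx11.
Qed.

Lemma row_full_tensmx m n p q (A : 'M[F]_(m, n)) (B : 'M[F]_(p, q)) :
  row_full A -> row_full B -> row_full (A *t B).
Proof.
move=> /row_fullP[A' hA] /row_fullP[B' hB]; apply/row_fullP.
by exists (A' *t B'); rewrite tensmx_mul hA hB tensmx11.
Qed.

Lemma tensmxS m n p q m' p' (A : 'M[F]_(m, n)) (B : 'M[F]_(p, q))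
    (A' : 'M[F]_(m', n)) (B' : 'M[F]_(p', q)) :
  (A <= A')%MS -> (B <= B')%MS -> (A *t B <= A' *t B')%MS.
Proof. by move=> /submxP[X ->] /submxP[Y ->]; rewrite -tensmx_mul submxMl. Qed.

Lemma tensmx_subP m n p q k (A : 'M[F]_(m, n)) (B : 'M[F]_(p, q))
    (S : 'M[F]_(k, n * q)) :
  reflect (forall Z, (mxtvec (A^T *m Z *m B) <= S)%MS) (A *t B <= S)%MS.
Proof.
apply: (iffP idP) => [sABS Z|sS].
  by rewrite mxtvec_mul; apply: submx_trans sABS; apply: submxMl.
apply/row_subP => k0; rewrite rowE -[delta_mx _ _]tvec_mxK -mxtvec_mul; exact: sS.
Qed.

Lemma mxtvec_sub_tensmx m n p q (A : 'M[F]_(m, n)) (B : 'M[F]_(p, q))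
    (M : 'M[F]_(n, q)) :
  (mxtvec M <= A *t B)%MS <-> exists Z, M = A^T *m Z *m B.
Proof.
split => [/submxP[y hy]|[Z ->]]; last by rewrite mxtvec_mul submxMl.
by exists (tvec_mx y); apply: mxtvec_inj; rewrite mxtvec_mul tvec_mxK.
Qed.

Lemma mxtvec_sub_tens1mx n p q (B : 'M[F]_(p, q)) (M : 'M[F]_(n, q)) :
  (mxtvec M <= (1%:M : 'M_n) *t B)%MS = (M <= B)%MS.
Proof.
apply/idP/idP => [/mxtvec_sub_tensmx[Z ->]|/submxP[Z ->]].
  by rewrite trmx1 mul1mx submxMl.
by apply/mxtvec_sub_tensmx; exists Z; rewrite trmx1 mul1mx.
Qed.

Lemma mxtvec_sub_tensmx_trmx m n (A : 'M[F]_m) (B : 'M[F]_n) (M : 'M[F]_(m, n)) :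
  (M^T <= A)%MS -> (M <= B)%MS -> (mxtvec M <= A *t B)%MS.
Proof.
move=> sMA sMB; apply/mxtvec_sub_tensmx.
exists ((pinvmx A)^T *m M *m pinvmx B).
have fixA : A^T *m (pinvmx A)^T *m M = M.
  by rewrite -[RHS]trmxK -(mulmxKpV sMA) [in RHS]trmx_mul [in RHS]trmx_mul trmxK mulmxA.
by rewrite -{1}(mulmxKpV sMB) -{1}fixA [A^T *m (_ *m pinvmx B)]mulmxA [A^T *m (_ *m M)]mulmxA.
Qed.

Lemma tens1mx_cap n p q r (B : 'M[F]_(p, q)) (C : 'M[F]_(r, q)) :
  ((1%:M : 'M_n) *t B :&: (1%:M : 'M_n) *t C <= (1%:M : 'M_n) *t (B :&: C))%MS.
Proof.
apply/row_subP => k; set v := row k _.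
have: (v <= (1%:M : 'M_n) *t B)%MS && (v <= (1%:M : 'M_n) *t C)%MS.
  by rewrite -sub_capmx row_sub.
by rewrite -(tvec_mxK v) !mxtvec_sub_tens1mx -sub_capmx.
Qed.

Lemma tensmx_addsr m n p1 p2 q (A : 'M[F]_(m, n)) (B : 'M[F]_(p1, q))
    (C : 'M[F]_(p2, q)) :
  (A *t (B + C)%MS <= A *t B + A *t C)%MS.
Proof.
have sBC : ((B + C)%MS <= col_mx B C)%MS by rewrite -addsmxE.
apply: submx_trans (tensmxS (submx_refl A) sBC) _.
apply/tensmx_subP => Z; rewrite -[Z]hsubmxK -mulmxA mul_row_col mulmxDr !mulmxA.
by rewrite mxtvecD addmx_sub_adds // mxtvec_mul submxMl.
Qed.

Lemma tensmx_addsl m1 m2 n p q (A1 : 'M[F]_(m1, n)) (A2 : 'M[F]_(m2, n))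
    (B : 'M[F]_(p, q)) :
  ((A1 + A2)%MS *t B <= A1 *t B + A2 *t B)%MS.
Proof.
have sA : ((A1 + A2)%MS <= col_mx A1 A2)%MS by rewrite -addsmxE.
apply: submx_trans (tensmxS sA (submx_refl B)) _.
apply/tensmx_subP => Z; rewrite -[Z]vsubmxK tr_col_mx mul_row_col mulmxDl.
by rewrite mxtvecD addmx_sub_adds // mxtvec_mul submxMl.
Qed.

End TensorSpaces.

Section RowSpaces.
Variable F : fieldType.

Lemma row_full1 n : row_full (1%:M : 'M[F]_n).
Proof. by rewrite row_full_unit unitmx1. Qed.

Lemma sumsmx_seq_subP (I : eqType) (s : seq I) m n (A_ : I -> 'M[F]_n)
    (B : 'M[F]_(m, n)) :
  reflect (forall i, i \in s -> (A_ i <= B)%MS) (\sum_(i <- s) A_ i <= B)%MS.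
Proof.
apply: (iffP idP) => [sAB i si | sAB].
  by apply: submx_trans sAB; rewrite (big_rem i) //= addsmxSl.
rewrite big_seq; elim/big_rec: _ => [|i Ai si sAiB]; first exact: sub0mx.
by rewrite addsmx_sub sAB.
Qed.

Lemma sumsmx_seq_sup (I : eqType) (s : seq I) i0 m n (A : 'M[F]_(m, n))
    (B_ : I -> 'M[F]_n) :
  i0 \in s -> (A <= B_ i0)%MS -> (A <= \sum_(i <- s) B_ i)%MS.
Proof.
by move=> si0 sAB; apply: submx_trans sAB _; rewrite (big_rem i0) //= addsmxSl.
Qed.

Lemma sumsmx_seqMr (I : eqType) (s : seq I) n p (A_ : I -> 'M[F]_n)
    (M : 'M[F]_(n, p)) :
  ((\sum_(i <- s) A_ i)%MS *m M <= \sum_(i <- s) <<A_ i *m M>>)%MS.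
Proof.
elim: s => [|x s IH]; first by rewrite !big_nil mul0mx sub0mx.
by rewrite !big_cons addsmxMr addsmxS // genmxE.
Qed.

Lemma row_free_mulmx_bij m n (A : 'M[F]_(m, n)) (B : 'M[F]_n) :
  row_free A -> (A :=: B)%MS ->
  (forall x : 'rV_m, (x *m A <= B)%MS) /\
  (forall y : 'rV_n, (y <= B)%MS -> exists! x, x *m A = y).
Proof.
move=> freeA eqAB; split => [x|y]; first by rewrite -eqAB submxMl.
rewrite -eqAB => /submxP[x ->]; exists x; split => // x' ex'.
by apply: (row_free_inj freeA); rewrite ex'.
Qed.

(* Enlarge a fixed row space by one fixed vector at a time; [n - \rank M] bounds the number
   of steps. *)
Lemma fixed_rowspace_exists n (I : Type) (P : I -> Prop) (f : I -> 'M[F]_n) :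
  exists M : 'M[F]_n, forall v : 'rV_n,
    (v <= M)%MS <-> (forall g, P g -> v *m f g = v).
Proof.
pose fixed (M : 'M[F]_n) := forall g, P g -> M *m f g = M.
have fixed_rows M : fixed M -> forall v : 'rV_n, (v <= M)%MS -> forall g, P g -> v *m f g = v.
  by move=> fM v /submxP[x ->] g Pg; rewrite -mulmxA fM.
suff /(_ n 0) : forall d M, fixed M -> (n - \rank M <= d)%N -> exists M' : 'M[F]_n,
    forall v : 'rV_n, (v <= M')%MS <-> (forall g, P g -> v *m f g = v).
  by apply; [move=> g _; rewrite mul0mx | rewrite leq_subr].
elim=> [|d IH] M fM rkM.
  exists M => v; split => [|_]; first exact: fixed_rows.
  by apply: submx_full; rewrite /row_full eqn_leq rank_leq_col /=; lia.
have [maxM|] := classic (forall v : 'rV_n, (forall g, P g -> v *m f g = v) -> (v <= M)%MS).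
  by exists M => v; split; [exact: fixed_rows | exact: maxM].
case/not_all_ex_not => v nfvM.
have fv : forall g, P g -> v *m f g = v by apply: NNPP => nfv; apply: nfvM => /nfv.
have nvM : ~ (v <= M)%MS by move=> vM; apply: nfvM.
apply: (IH (M + v)%MS).
  have /submxP[X ->] : ((M + v)%MS <= col_mx M v)%MS by rewrite -addsmxE.
  by move=> g Pg; rewrite -mulmxA mul_col_mx fM // fv.
have ltM : (M < M + v)%MS.
  by rewrite ltmxE addsmxSl; apply/negP => /(submx_trans (addsmxSr M v)).
by have := rank_ltmx ltM; have := rank_leq_col (M + v)%MS; lia.
Qed.

Lemma fixed_component m n (A : 'M[F]_m) (B : 'M[F]_n) (W S : 'M[F]_n)
    (M1 M2 : 'M[F]_(m, n)) :
  W *m B = W -> (S *m B <= S)%MS -> (W :&: S)%MS = 0 ->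
  (M1 <= W)%MS -> (M2 <= S)%MS ->
  A^T *m (M1 + M2) *m B = M1 + M2 -> A^T *m M1 = M1.
Proof.
move=> WB SB capWS sM1W sM2S fixM.
have M1B : M1 *m B = M1 by have /submxP[X ->] := sM1W; rewrite -mulmxA WB.
have eqD : A^T *m M1 - M1 = M2 - A^T *m M2 *m B.
  move: fixM; rewrite mulmxDr mulmxDl -(mulmxA _ M1) M1B => fixM.
  by rewrite -[A^T *m M1](addrK (A^T *m M2 *m B)) fixM addrAC [M1 + M2]addrC addrK.
have : (A^T *m M1 - M1 <= W :&: S)%MS.
  rewrite sub_capmx {2}eqD !addmx_sub ?eqmx_opp //.
  - exact: submx_trans (submxMl _ _) sM1W.
  - apply: submx_trans SB; apply: submxMr; exact: submx_trans (submxMl _ _) sM2S.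
by rewrite capWS submx0 subr_eq0 => /eqP.
Qed.

End RowSpaces.

Arguments sumsmx_seq_sup [F I s] i0 [m n A B_].

Section CastCols.
Variable F : fieldType.

Lemma castcolsE r a b (e : a = b) (A : 'M[F]_(r, a)) :
  castcols b A = castmx (erefl r, e) A.
Proof.
rewrite /castcols; case: (a =P b) => [e'|]; last by case.
by rewrite (eq_irrelevance e e').
Qed.

Lemma castcols_id r a (A : 'M[F]_(r, a)) : castcols a A = A.
Proof. by rewrite (castcolsE (erefl a)) castmx_id. Qed.

Lemma castcolsK r a b (e : a = b) (A : 'M[F]_(r, a)) :
  castcols a (castcols b A) = A.
Proof. by case: b / e; rewrite !castcols_id. Qed.

Lemma castcols_neq r a b (A : 'M[F]_(r, a)) : a <> b -> castcols b A = 0.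
Proof. by rewrite /castcols; case: (a =P b). Qed.

Lemma castcols0 r a b : castcols b (0 : 'M[F]_(r, a)) = 0.
Proof.
case: (a =P b) => [e|ne]; last exact: castcols_neq.
by case: b / e; rewrite castcols_id.
Qed.

Lemma castcolsD r a b (A B : 'M[F]_(r, a)) :
  castcols b (A + B) = castcols b A + castcols b B.
Proof.
case: (a =P b) => [e|ne]; last by rewrite !castcols_neq // addr0.
by case: b / e; rewrite !castcols_id.
Qed.

Lemma castcols_inj r a b (A B : 'M[F]_(r, a)) :
  a = b -> castcols b A = castcols b B -> A = B.
Proof. by move=> e; case: b / e; rewrite !castcols_id. Qed.

Lemma castcolsS r1 r2 a b (A : 'M[F]_(r1, a)) (B : 'M[F]_(r2, a)) :
  (A <= B)%MS -> (castcols b A <= castcols b B)%MS.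
Proof.
case: (a =P b) => [e|ne]; last by rewrite !castcols_neq // sub0mx.
by case: b / e; rewrite !castcols_id.
Qed.

Lemma castcols_subE r1 r2 a b (A : 'M[F]_(r1, a)) (B : 'M[F]_(r2, a)) :
  a = b -> (castcols b A <= castcols b B)%MS = (A <= B)%MS.
Proof. by move=> e; case: b / e; rewrite !castcols_id. Qed.

Lemma row_free_castcols r a b (A : 'M[F]_(r, a)) :
  a = b -> row_free (castcols b A) = row_free A.
Proof. by move=> e; case: b / e; rewrite castcols_id. Qed.

Lemma row_full_castcols r a b (A : 'M[F]_(r, a)) :
  a = b -> row_full (castcols b A) = row_full A.
Proof. by move=> e; case: b / e; rewrite castcols_id. Qed.

Lemma castcols_adds r1 r2 a b (A : 'M[F]_(r1, a)) (B : 'M[F]_(r2, a)) :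
  (castcols b (A + B)%MS <= castcols b A + castcols b B)%MS.
Proof.
case: (a =P b) => [e|ne]; last by rewrite !castcols_neq // sub0mx.
by case: b / e; rewrite !castcols_id.
Qed.

Lemma castcols_cap r1 r2 a b (A : 'M[F]_(r1, a)) (B : 'M[F]_(r2, a)) :
  (castcols b A :&: castcols b B <= castcols b (A :&: B))%MS.
Proof.
case: (a =P b) => [e|ne]; last by rewrite !castcols_neq // capmx0 sub0mx.
by case: b / e; rewrite !castcols_id.
Qed.

Lemma castcols_mulmx_cast r a b (e : a = b) (T : 'M[F]_(r, a)) (M : 'M[F]_a) :
  castcols b T *m castmx (e, e) M = castcols b (T *m M).
Proof. by case: b / e; rewrite !castcols_id castmx_id. Qed.

Lemma castcols_tens1mx r b D (B : 'M[F]_(r, b)) :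
  b = D -> (castcols D ((1%:M : 'M[F]_1) *t B) :=: castcols D B)%MS.
Proof.
move=> e; case: D / e; rewrite castcols_id tens_scalar1mx.
by rewrite (castcolsE (mul1n b)) castmx_comp; apply: eqmx_cast.
Qed.

Lemma castcols_tensmxA r1 r2 r3 a b c Dab Dbc D (A : 'M[F]_(r1, a))
    (B : 'M[F]_(r2, b)) (C : 'M[F]_(r3, c)) :
  (a * b = Dab)%N -> (b * c = Dbc)%N -> (a * Dbc = D)%N -> (Dab * c = D)%N ->
  (castcols D (A *t castcols Dbc (B *t C)) :=:
   castcols D (castcols Dab (A *t B) *t C))%MS.
Proof.
move=> <- <- <- e; rewrite !castcols_id (castcolsE e) tensmxA.
rewrite (eq_castmx _ (esym (mulnA r1 r2 r3), e)).
set M := (A *t B) *t C; set er := esym _.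
have -> : castmx (er, e) M = castmx (er, erefl _) (castmx (erefl _, e) M).
  by rewrite castmx_comp; apply: eq_castmx.
exact: eqmx_cast.
Qed.

Lemma castcols_tensmx_full r1 r2 r3 a b D (A : 'M[F]_(r1, a)) (A' : 'M[F]_(r2, a))
    (B : 'M[F]_(r3, b)) :
  row_full A -> row_full A' -> (castcols D (A *t B) :=: castcols D (A' *t B))%MS.
Proof.
move=> fullA fullA'; apply/eqmxP/andP.
by split; apply: castcolsS; apply: tensmxS => //; apply: submx_full.
Qed.

Lemma castcols_tensmx_sums (I : eqType) (s : seq I) r a b D (X : 'M[F]_(r, a))
    (A_ : I -> 'M[F]_b) :
  (castcols D (X *t (\sum_(i <- s) A_ i)%MS) <=
     \sum_(i <- s) <<castcols D (X *t A_ i)>>)%MS.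
Proof.
elim: s => [|x s IH]; first by rewrite !big_nil tensmx0 castcols0 sub0mx.
rewrite !big_cons; apply: submx_trans (castcolsS _ (tensmx_addsr _ _ _)) _.
by apply: submx_trans (castcols_adds _ _ _) _; rewrite addsmxS // genmxE.
Qed.

End CastCols.

Section Sequences.
Variable T : Type.

Lemma cut_vertexE (i : T) l k :
  (k <= size l)%N -> cut_vertex i l k = last i (take k l).
Proof.
rewrite /cut_vertex; elim: l i k => [|j l IH] i [|k] //= hk.
by rewrite -IH //; apply: set_nth_default; rewrite /= ltnS.
Qed.

Lemma cut_vertex_take (i : T) l j k : (j <= k)%N -> (k <= size l)%N ->
  cut_vertex i (take k l) j = cut_vertex i l j.
Proof.
move=> ljk lkl; rewrite !cut_vertexE ?size_takel ?take_takel //; lia.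
Qed.

Lemma drop_take_cat (l : seq T) j k : (j <= k)%N -> (k <= size l)%N ->
  drop j (take k l) ++ drop k l = drop j l.
Proof.
move=> ljk lkl; rewrite -{3}(cat_take_drop k l) drop_cat size_takel //.
case: ltnP => // lkj; have -> : j = k by lia.
by rewrite subnn drop0 drop_oversize ?size_takel.
Qed.

Lemma last_drop_take (i : T) l j k : (j <= k)%N -> (k <= size l)%N ->
  last (cut_vertex i l j) (drop j (take k l)) = cut_vertex i l k.
Proof.
move=> ljk lkl; rewrite !cut_vertexE //; last by lia.
by rewrite -last_cat -{1}(take_takel l ljk) cat_take_drop.
Qed.

Lemma subpath_refl (i : T) l : subpath i l i l.
Proof. by exists 0%N; rewrite add0n drop0 -[(size l).+1]/(size (i :: l)) take_size. Qed.

Lemma subpath_take (i : T) l i0 l0 k : subpath i l i0 l0 -> (k <= size l)%N ->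
  subpath i (take k l) i0 l0.
Proof.
move=> [s [ls e]] lkl; exists s; rewrite size_takel //; split; first by lia.
by rewrite -/(take k.+1 (i :: l)) e take_takel.
Qed.

Lemma subpath_drop (i : T) l i0 l0 k : subpath i l i0 l0 -> (k <= size l)%N ->
  subpath (cut_vertex i l k) (drop k l) i0 l0.
Proof.
move=> [s [ls e]] lkl; exists (s + k)%N; rewrite size_drop; split; first by lia.
have -> : cut_vertex i l k :: drop k l = drop k (i :: l).
  by rewrite [drop k (i :: l)](drop_nth i).
rewrite e addnC -drop_drop [RHS]take_drop.
by have -> : ((size l - k).+1 + k = (size l).+1)%N by lia.
Qed.

End Sequences.

Lemma comps_auxS f n : comps_aux f.+1 n.+1 =
  flatten [seq [seq k :: c | c <- comps_aux f (n.+1 - k)] | k <- iota 1 n.+1].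
Proof. by []. Qed.

Lemma comps_auxE f n : (n <= f)%N -> comps_aux f n = comps n.
Proof.
rewrite /comps; elim/ltn_ind: n f => -[|n] IH [|f] // lnf.
rewrite !comps_auxS; congr flatten; apply/eq_in_map => k; rewrite mem_iota => /andP[lk1 lkn].
have ltk : (n.+1 - k < n.+1)%N by lia.
by rewrite (IH _ ltk f) ?(IH _ ltk n) //; lia.
Qed.

Lemma compsS n : comps n.+1 =
  flatten [seq [seq k :: c | c <- comps (n.+1 - k)] | k <- iota 1 n.+1].
Proof.
rewrite {1}/comps comps_auxS; congr flatten; apply/eq_in_map => k.
by rewrite mem_iota => /andP[lk1 lkn]; rewrite comps_auxE //; lia.
Qed.

Section PathSpaces.
Variables (F : fieldType) (Q0 : Type) (na : Q0 -> Q0 -> nat).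
Local Notation Dim := (Dim na).
Local Notation cv := cut_vertex.

Lemma Dim_cat i p q : Dim i (p ++ q) = (Dim (last i p) q * Dim i p)%N.
Proof. by elim: p i => [|j p IH] i /=; rewrite ?muln1 // IH mulnA. Qed.

Lemma act_cat (g : arrow_family F na) i p q :
  act g i (p ++ q) = castmx (esym (Dim_cat i p q), esym (Dim_cat i p q))
    (act g (last i p) q *t act g i p).
Proof.
elim: p i => [|j p IH] i /=.
  by rewrite tens_mx_scalar scale1r castmx_comp castmx_id.
by rewrite IH tensmx_castl tensmxA castmx_comp; apply: eq_castmx.
Qed.

Lemma castcols_mulmx_act (g : arrow_family F na) i l x p q r
    (T : 'M[F]_(r, Dim x q * Dim i p)) :
  l = p ++ q -> x = last i p ->
  castcols (Dim i l) T *m act g i l =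
  castcols (Dim i l) (T *m (act g x q *t act g i p)).
Proof. by move=> -> defx; subst x; rewrite act_cat castcols_mulmx_cast. Qed.

Lemma Dim_take_drop i l k : (k <= size l)%N ->
  (Dim (cv i l k) (drop k l) * Dim i (take k l))%N = Dim i l.
Proof. by move=> lkl; rewrite cut_vertexE // -Dim_cat cat_take_drop. Qed.

Lemma Dim_drop_take i l j k : (j <= k)%N -> (k <= size l)%N ->
  (Dim (cv i l k) (drop k l) * Dim (cv i (take k l) j) (drop j (take k l)))%N =
  Dim (cv i l j) (drop j l).
Proof.
by move=> ljk lkl; rewrite cut_vertex_take // -(drop_take_cat ljk lkl) Dim_cat last_drop_take.
Qed.

Lemma castcols_mulmx_act_take_drop (g : arrow_family F na) i l k r
    (T : 'M[F]_(r, Dim (cv i l k) (drop k l) * Dim i (take k l))) :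
  (k <= size l)%N ->
  castcols (Dim i l) T *m act g i l =
  castcols (Dim i l) (T *m (act g (cv i l k) (drop k l) *t act g i (take k l))).
Proof.
by move=> lkl; apply: castcols_mulmx_act; rewrite ?cat_take_drop ?cut_vertexE.
Qed.

Lemma castcols_tensmxA_take i l j k r1 r2 r3 (A : 'M[F]_(r1, Dim (cv i l k) (drop k l)))
    (B : 'M[F]_(r2, Dim (cv i (take k l) j) (drop j (take k l))))
    (C : 'M[F]_(r3, Dim i (take j (take k l)))) :
  (j <= k)%N -> (k <= size l)%N ->
  (castcols (Dim i l) (A *t castcols (Dim i (take k l)) (B *t C)) :=:
   castcols (Dim i l) (castcols (Dim (cv i l j) (drop j l)) (A *t B) *t C))%MS.
Proof.
move=> ljk lkl; apply: castcols_tensmxA; rewrite ?Dim_drop_take ?Dim_take_drop //.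
  by rewrite size_takel.
by rewrite take_takel // Dim_take_drop //; lia.
Qed.

Section Invariants.
Variable G : arrow_family F na -> Prop.
Local Notation VG := (fixmx G).

Lemma fixmxP i l (v : 'rV[F]_(Dim i l)) :
  (v <= VG i l)%MS <-> (forall g, G g -> v *m act g i l = v).
Proof.
have [M defM] := fixed_rowspace_exists G (fun g => act g i l).
move: v; exact: (epsilon_spec (inhabits 0) (fun M : 'M[F]_(Dim i l) =>
  forall v : 'rV_(Dim i l), (v <= M)%MS <-> (forall g, G g -> v *m act g i l = v))
  (ex_intro _ M defM)).
Qed.

Lemma fixmx_mulmx i l r (M : 'M[F]_(r, Dim i l)) g :
  (M <= VG i l)%MS -> G g -> M *m act g i l = M.
Proof.
move=> sMV Gg; apply/row_matrixP => k; rewrite row_mul.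
by apply: (fixmxP _).1 Gg; apply: submx_trans (row_sub k M) sMV.
Qed.

Lemma fixmx_sub i l r (M : 'M[F]_(r, Dim i l)) :
  (forall g, G g -> M *m act g i l = M) -> (M <= VG i l)%MS.
Proof. by move=> fixM; apply/row_subP => k; apply/fixmxP => g Gg; rewrite -row_mul fixM. Qed.

Lemma row_full_fixmx_nil i : row_full (VG i [::]).
Proof. by rewrite -sub1mx; apply: fixmx_sub => g _ /=; rewrite mulmx1. Qed.

Lemma tensmx_fixmx_sub i l x p q r1 r2 (A : 'M[F]_(r1, Dim x q))
    (B : 'M[F]_(r2, Dim i p)) :
  l = p ++ q -> x = last i p -> (A <= VG x q)%MS -> (B <= VG i p)%MS ->
  (castcols (Dim i l) (A *t B) <= VG i l)%MS.
Proof.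
move=> defl defx sAV sBV; apply: fixmx_sub => g Gg.
by rewrite (castcols_mulmx_act _ _ defl defx) tensmx_mul !fixmx_mulmx.
Qed.

Lemma fixmx_tvec_mx i l k (M : 'M[F]_(Dim (cv i l k) (drop k l), Dim i (take k l)))
    g : (k <= size l)%N -> G g ->
  (castcols (Dim i l) (mxtvec M) <= VG i l)%MS ->
  (act g (cv i l k) (drop k l))^T *m M *m act g i (take k l) = M.
Proof.
move=> lkl Gg /fixmxP/(_ g Gg).
rewrite castcols_mulmx_act_take_drop // -mxtvec_mul.
by move/(castcols_inj (Dim_take_drop i lkl))/mxtvec_inj.
Qed.

End Invariants.
End PathSpaces.

Section IrreducibleInvariants.
Variables (F : fieldType) (Q0 : Type) (na : Q0 -> Q0 -> nat).
Variable G : arrow_family F na -> Prop.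
Variable W : forall (i : Q0) (l : seq Q0), 'M[F]_(Dim na i l).
Variables (i0 : Q0) (l0 : seq Q0).
Hypothesis HW : forall i l, subpath i l i0 l0 -> (0 < size l)%N -> irr_space G W i l.

Local Notation Dim := (Dim na).
Local Notation cv := cut_vertex.
Local Notation VG := (fixmx G).
Local Notation sub i l := (subpath i l i0 l0).

(* With omega = omega'' omega' split after its first k arrows, [fixW i l k] is
   V^G_omega'' (x) W_omega' and [fullW i l k] is V_omega'' (x) W_omega'. *)
Definition fixW i l k : 'M[F]_(_, Dim i l) :=
  castcols (Dim i l) (VG (cv i l k) (drop k l) *t W i (take k l)).

Definition fullW i l k : 'M[F]_(_, Dim i l) :=
  castcols (Dim i l) ((1%:M : 'M_(Dim (cv i l k) (drop k l))) *t W i (take k l)).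

Definition fixWs i l N := (\sum_(1 <= k < N) <<fixW i l k>>)%MS.

Definition fullWs i l N := (\sum_(1 <= k < N) <<fullW i l k>>)%MS.

Lemma W_sub_fixmx i l : sub i l -> (0 < size l)%N -> (W i l <= VG i l)%MS.
Proof.
move=> sil lt0l; have [/andP[sWCV _] _] := HW sil lt0l.
exact: submx_trans (addsmxSl _ _) sWCV.
Qed.

Lemma W_cap_compmx i l : sub i l -> (0 < size l)%N -> (W i l :&: compmx G i l)%MS = 0.
Proof.
by move=> sil lt0l; case: (HW sil lt0l) => _; rewrite mxdirect_addsE => /and3P[_ _ /eqP].
Qed.

Lemma W_take_sub_fixmx i l k : sub i l -> (0 < k)%N -> (k <= size l)%N ->
  (W i (take k l) <= VG i (take k l))%MS.
Proof.
by move=> sil lt0k lkl; apply: W_sub_fixmx; [exact: subpath_take | rewrite size_takel].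
Qed.

Lemma fixW_sub_fullW i l k : (fixW i l k <= fullW i l k)%MS.
Proof. by apply/castcolsS/tensmxS; rewrite ?submx1. Qed.

Lemma fixW_sub_fixmx i l k : sub i l -> (0 < k)%N -> (k <= size l)%N ->
  (fixW i l k <= VG i l)%MS.
Proof.
move=> sil lt0k lkl; apply: tensmx_fixmx_sub; rewrite ?cat_take_drop ?cut_vertexE //.
exact: W_take_sub_fixmx.
Qed.

Lemma fixW_size i l : (fixW i l (size l) :=: W i l)%MS.
Proof.
rewrite /fixW drop_size take_size.
apply: eqmx_trans (castcols_tensmx_full _ _ (row_full_fixmx_nil G _) (row_full1 F 1)) _.
by apply: eqmx_trans (castcols_tens1mx _ (erefl _)) _; rewrite castcols_id.
Qed.

Lemma fixWsS i l N1 N2 : (N1 <= N2)%N -> (fixWs i l N1 <= fixWs i l N2)%MS.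
Proof.
move=> lN12; apply/sumsmx_seq_subP => k; rewrite mem_index_iota => /andP[lk1 lkN].
by apply: (sumsmx_seq_sup k); rewrite ?mem_index_iota ?lk1 //=; lia.
Qed.

Lemma fixWs_sub_fullWs i l N : (fixWs i l N <= fullWs i l N)%MS.
Proof.
apply/sumsmx_seq_subP => k kN; apply: (sumsmx_seq_sup k) => //.
by rewrite !genmxE fixW_sub_fullW.
Qed.

Lemma fixWs_sub_compmx i l N : sub i l -> (N <= size l)%N ->
  (fixWs i l N <= compmx G i l)%MS.
Proof.
move=> sil lNl; apply/sumsmx_seq_subP => k; rewrite mem_index_iota => /andP[lk1 lkN].
apply: (sumsmx_seq_sup k); first by rewrite mem_index_iota lk1; lia.
by rewrite !genmxE; apply/castcolsS/tensmxS => //; apply: W_take_sub_fixmx => //; lia.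
Qed.

Lemma fullWs_act i l N g : sub i l -> (N <= (size l).+1)%N -> G g ->
  (fullWs i l N *m act g i l <= fullWs i l N)%MS.
Proof.
move=> sil lNl Gg; apply: submx_trans (sumsmx_seqMr _ _ _) _.
apply/sumsmx_seq_subP => k kN; move: (kN); rewrite mem_index_iota => /andP[lk1 lkN].
apply: (sumsmx_seq_sup k kN); rewrite !genmxE (eqmxMr _ (genmxE _)).
rewrite castcols_mulmx_act_take_drop; last by lia.
have sWV : (W i (take k l) <= VG i (take k l))%MS by apply: W_take_sub_fixmx => //; lia.
rewrite tensmx_mul mul1mx (fixmx_mulmx sWV Gg).
by apply/castcolsS/tensmxS; rewrite ?submx1.
Qed.

Lemma fullW_take i l k b : (k <= b)%N -> (b <= size l)%N ->
  (castcols (Dim i l) ((1%:M : 'M_(Dim (cv i l b) (drop b l))) *t fullW i (take b l) k)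
    :=: fullW i l k)%MS.
Proof.
move=> lkb lbl; apply: eqmx_trans (castcols_tensmxA_take _ _ _ lkb lbl) _.
rewrite /fullW take_takel //; apply: castcols_tensmx_full; last exact: row_full1.
by rewrite row_full_castcols ?Dim_drop_take // row_full_tensmx ?row_full1.
Qed.

Lemma fullWs_take i l b : (b <= size l)%N ->
  (fullWs i l b :=: castcols (Dim i l)
     ((1%:M : 'M_(Dim (cv i l b) (drop b l))) *t fullWs i (take b l) b))%MS.
Proof.
move=> lbl; apply/eqmxP/andP; split.
  apply/sumsmx_seq_subP => k kb; move: (kb); rewrite mem_index_iota => /andP[_ lkb].
  rewrite genmxE -(fullW_take i (ltnW lkb) lbl); apply/castcolsS/tensmxS => //.
  by apply: (sumsmx_seq_sup k); rewrite ?genmxE.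
apply: submx_trans (castcols_tensmx_sums _ _ _ _) _.
apply/sumsmx_seq_subP => k kb; move: (kb); rewrite mem_index_iota => /andP[_ lkb].
apply: (sumsmx_seq_sup k kb); rewrite !genmxE -(fullW_take i (ltnW lkb) lbl).
by apply/castcolsS/tensmxS; rewrite ?genmxE.
Qed.

Lemma fixmx_tensmx_sub_fixWs i l k : sub i l -> (0 < k)%N -> (k < size l)%N ->
  (castcols (Dim i l) (VG (cv i l k) (drop k l) *t VG i (take k l)) <= fixWs i l k.+1)%MS.
Proof.
move=> sil; elim/ltn_ind: k => k IH lt0k lkl.
have sizek : size (take k l) = k by rewrite size_takel // ltnW.
have [/andP[_ sVWC] _] : irr_space G W i (take k l).
  by apply: HW; [exact: subpath_take (ltnW lkl) | rewrite sizek].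
apply: submx_trans (castcolsS _ (tensmxS (submx_refl _) sVWC)) _.
apply: submx_trans (castcolsS _ (tensmx_addsr _ _ _)) _.
apply: submx_trans (castcols_adds _ _ _) _; rewrite addsmx_sub; apply/andP; split.
  by apply: (sumsmx_seq_sup k); rewrite ?genmxE // mem_index_iota; lia.
rewrite /compmx sizek; apply: submx_trans (castcols_tensmx_sums _ _ _ _) _.
apply/sumsmx_seq_subP => j; rewrite mem_index_iota => /andP[lt0j ljk].
set B := castcols (Dim i (take k l)) _; have sGB : (<<B>> <= B)%MS by rewrite genmxE.
rewrite genmxE; apply: submx_trans (castcolsS _ (tensmxS (submx_refl _) sGB)) _.
rewrite castcols_tensmxA_take ?(ltnW ljk) ?(ltnW lkl) //.
rewrite cut_vertex_take ?take_takel ?(ltnW ljk) ?(ltnW lkl) //.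
have sVVV : (castcols (Dim (cv i l j) (drop j l))
    (VG (cv i l k) (drop k l) *t VG (cv i l j) (drop j (take k l)))
    <= VG (cv i l j) (drop j l))%MS.
  have [ljk' lkl'] := (ltnW ljk, ltnW lkl).
  by apply: tensmx_fixmx_sub; rewrite ?drop_take_cat ?last_drop_take.
apply: submx_trans (castcolsS _ (tensmxS sVVV (submx_refl _))) _.
by apply: submx_trans (IH j ljk lt0j _) (fixWsS _ _ _); lia.
Qed.

Lemma compmx_sub_fixWs i l : sub i l -> (compmx G i l <= fixWs i l (size l))%MS.
Proof.
move=> sil; apply/sumsmx_seq_subP => k; rewrite mem_index_iota => /andP[lt0k lkl].
rewrite genmxE; apply: submx_trans (fixmx_tensmx_sub_fixWs sil lt0k lkl) _.
exact: fixWsS.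
Qed.

(* This is where the sum of the [fixW i l k] becomes direct. *)
Lemma irr_component_sub_fixW i l b
    (M1 M2 : 'M[F]_(Dim (cv i l b) (drop b l), Dim i (take b l))) :
  sub i l -> (0 < b)%N -> (b < size l)%N ->
  (W i (take b l) :&: fullWs i (take b l) b)%MS = 0 ->
  (M1 <= W i (take b l))%MS -> (M2 <= fullWs i (take b l) b)%MS ->
  (castcols (Dim i l) (mxtvec (M1 + M2)) <= VG i l)%MS ->
  (castcols (Dim i l) (mxtvec M1) <= fixW i l b)%MS.
Proof.
move=> sil lt0b lbl capWS sM1 sM2 MV.
have sWV : (W i (take b l) <= VG i (take b l))%MS := W_take_sub_fixmx sil lt0b (ltnW lbl).
apply/castcolsS/mxtvec_sub_tensmx_trmx => //; apply: fixmx_sub => g Gg.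
have SB : (fullWs i (take b l) b *m act g i (take b l) <= fullWs i (take b l) b)%MS.
  by apply: fullWs_act Gg; [exact: subpath_take (ltnW lbl) | rewrite size_takel; lia].
have := fixmx_tvec_mx (ltnW lbl) Gg MV.
move/(fixed_component (fixmx_mulmx sWV Gg) SB capWS sM1 sM2) => fixM1.
by rewrite -[in RHS]fixM1 [in RHS]trmx_mul trmxK.
Qed.

Lemma fixmx_fullWsS i l b : sub i l -> (0 < b)%N -> (b < size l)%N ->
  (W i (take b l) :&: fullWs i (take b l) b)%MS = 0 ->
  (VG i l :&: fullWs i l b.+1 <= fixW i l b + (VG i l :&: fullWs i l b))%MS.
Proof.
move=> sil lt0b lbl capWS; apply/row_subP => r; set v := row r _.
have /andP[vV vWs] : (v <= VG i l)%MS && (v <= fullWs i l b.+1)%MS.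
  by rewrite -sub_capmx row_sub.
have eDim := Dim_take_drop na i (ltnW lbl).
pose M := tvec_mx (castcols (Dim (cv i l b) (drop b l) * Dim i (take b l)) v).
have defv : v = castcols (Dim i l) (mxtvec M) by rewrite /M tvec_mxK castcolsK.
have /sub_addsmxP[[u1 u2] /= defM] : (M <= W i (take b l) + fullWs i (take b l) b)%MS.
  rewrite -mxtvec_sub_tens1mx -(castcols_subE _ _ eDim) -defv.
  apply: submx_trans vWs _; rewrite /fullWs big_nat_recr //= -/(fullWs i l b).
  rewrite addsmx_sub (fullWs_take i (ltnW lbl)) genmxE.
  by apply/andP; split; apply/castcolsS/tensmxS; rewrite ?addsmxSl ?addsmxSr.
set x1 := castcols (Dim i l) (mxtvec (u1 *m W i (take b l))).
set x2 := castcols (Dim i l) (mxtvec (u2 *m fullWs i (take b l) b)).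
have x1W : (x1 <= fixW i l b)%MS.
  apply: (irr_component_sub_fixW (M2 := u2 *m fullWs i (take b l) b) sil lt0b lbl capWS).
  - exact: submxMl.
  - exact: submxMl.
  - by rewrite -defM -defv.
have defx2 : x2 = v - x1 by rewrite defv defM mxtvecD castcolsD -/x1 -/x2 addrC addKr.
have x2V : (x2 <= VG i l)%MS.
  rewrite defx2; apply: addmx_sub vV _; rewrite eqmx_opp; apply: submx_trans x1W _.
  exact: fixW_sub_fixmx sil lt0b (ltnW lbl).
have x2Ws : (x2 <= fullWs i l b)%MS.
  by rewrite (fullWs_take i (ltnW lbl)); apply/castcolsS; rewrite mxtvec_sub_tens1mx submxMl.
by rewrite -[v](subrK x1) -defx2 addrC addmx_sub_adds // sub_capmx x2V.
Qed.

Lemma fixmx_fullWs_sub i l N : sub i l ->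
  (forall b, (0 < b)%N -> (b < size l)%N ->
     (W i (take b l) :&: fullWs i (take b l) b)%MS = 0) ->
  (N <= size l)%N -> (VG i l :&: fullWs i l N <= fixWs i l N)%MS.
Proof.
move=> sil capW; elim: N => [|b IH] lNl; first by rewrite /fullWs big_geq // capmx0 sub0mx.
have [->|lt0b] := posnP b; first by rewrite /fullWs big_geq // capmx0 sub0mx.
apply: submx_trans (fixmx_fullWsS sil lt0b lNl (capW b lt0b lNl)) _.
rewrite /fixWs big_nat_recr //= -/(fixWs i l b) addsmxC addsmxS ?genmxE //.
exact: IH (ltnW lNl).
Qed.

Lemma W_cap_fullWs i l : sub i l -> (0 < size l)%N ->
  (W i l :&: fullWs i l (size l))%MS = 0.
Proof.
move=> sil; have [n] := ubnP (size l); elim: n i l sil => // n IH i l sil ltln lt0l.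
have capW b : (0 < b)%N -> (b < size l)%N ->
    (W i (take b l) :&: fullWs i (take b l) b)%MS = 0.
  move=> lt0b lbl; have := IH i (take b l) (subpath_take sil (ltnW lbl)).
  by rewrite size_takel; [apply; lia | lia].
apply/eqP; rewrite -submx0 -(W_cap_compmx sil lt0l) sub_capmx capmxSl /=.
apply: submx_trans (fixWs_sub_compmx sil (leqnn _)).
apply: submx_trans (fixmx_fullWs_sub sil capW (leqnn _)).
by rewrite sub_capmx capmxSr andbT; apply: submx_trans (capmxSl _ _) (W_sub_fixmx sil lt0l).
Qed.

Lemma fixW_cap_fixWs i l b : sub i l -> (0 < b)%N -> (b <= size l)%N ->
  (<<fixW i l b>> :&: fixWs i l b)%MS = 0.
Proof.
move=> sil lt0b lbl; apply/eqP; rewrite -submx0.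
have [ltbl|lelb] := ltnP b (size l); last first.
  have eb : b = size l by lia.
  rewrite -(W_cap_compmx sil (leq_trans lt0b lbl)) capmxS //.
    by rewrite genmxE eb fixW_size.
  exact: fixWs_sub_compmx.
have sF : (<<fixW i l b>> <= fullW i l b)%MS by rewrite genmxE fixW_sub_fullW.
have sS : (fixWs i l b <=
    castcols (Dim i l) ((1%:M : 'M_(Dim (cv i l b) (drop b l))) *t fullWs i (take b l) b))%MS.
  by rewrite -(fullWs_take i (ltnW ltbl)) fixWs_sub_fullWs.
apply: submx_trans (capmxS sF sS) _; apply: submx_trans (castcols_cap _ _ _) _.
apply: submx_trans (castcolsS _ (tens1mx_cap _ _ _)) _.
have := W_cap_fullWs (subpath_take sil lbl); rewrite size_takel // => -> //.
by rewrite tensmx0 castcols0 sub0mx.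
Qed.

Lemma mxrank_fixWs i l N : sub i l -> (N <= (size l).+1)%N ->
  \rank (fixWs i l N) = (\sum_(1 <= k < N) \rank (fixW i l k))%N.
Proof.
move=> sil; elim: N => [|b IH] lbl; first by rewrite /fixWs !big_geq // mxrank0.
have [->|lt0b] := posnP b; first by rewrite /fixWs !big_geq // mxrank0.
rewrite /fixWs !big_nat_recr //= -/(fixWs i l b) mxrank_disjoint_sum.
  by rewrite IH ?mxrank_gen // ltnW.
by rewrite capmxC fixW_cap_fixWs.
Qed.

Lemma fixWs_full i l : sub i l -> (0 < size l)%N -> (fixWs i l (size l).+1 :=: VG i l)%MS.
Proof.
move=> sil lt0l; have [/andP[sWCV sVWC] _] := HW sil lt0l.
have sGW : (<<fixW i l (size l)>> :=: W i l)%MS.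
  exact: eqmx_trans (genmxE _) (fixW_size _ _).
apply/eqmxP; rewrite /fixWs big_nat_recr //= -/(fixWs i l (size l)); apply/andP; split.
  apply: submx_trans sWCV; rewrite addsmxC addsmxS ?sGW //.
  exact: fixWs_sub_compmx.
apply: submx_trans sVWC _; rewrite addsmxC addsmxS ?sGW //.
exact: compmx_sub_fixWs.
Qed.

Lemma rs_cat ps1 ps2 i l : rs W (ps1 ++ ps2) i l = (rs W ps1 i l + rs W ps2 i l)%N.
Proof. by elim: ps1 => [|p ps1 IH] //=; rewrite IH addnA. Qed.

Lemma stackmx_cat ps1 ps2 i l :
  (stackmx W (ps1 ++ ps2) i l :=: stackmx W ps1 i l + stackmx W ps2 i l)%MS.
Proof.
elim: ps1 => [|p ps1 IH] /=; first exact/eqmx_sym/adds0mx.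
apply: eqmx_trans (eqmx_sym (addsmxE _ _)) _.
apply: eqmx_trans (adds_eqmx (eqmx_refl _) IH) _.
by rewrite addsmxA; apply: adds_eqmx (addsmxE _ _) (eqmx_refl _).
Qed.

Lemma rs_flatten (s : seq nat) (f : nat -> seq (seq nat)) i l :
  rs W (flatten [seq f k | k <- s]) i l = (\sum_(k <- s) rs W (f k) i l)%N.
Proof. by elim: s => [|k s IH]; rewrite ?big_nil ?big_cons //= rs_cat IH. Qed.

Lemma stackmx_flatten (s : seq nat) (f : nat -> seq (seq nat)) i l :
  (stackmx W (flatten [seq f k | k <- s]) i l :=: \sum_(k <- s) <<stackmx W (f k) i l>>)%MS.
Proof.
elim: s => [|k s IH]; first by rewrite big_nil; apply/eqmxP; rewrite !sub0mx.
rewrite big_cons /=; apply: eqmx_trans (stackmx_cat _ _ _ _) _.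
exact/adds_eqmx/IH/eqmx_sym/genmxE.
Qed.

Lemma rs_map_cons k cs i l :
  rs W [seq k :: c | c <- cs] i l =
  (rs W cs (cv i l k) (drop k l) * \rank (W i (take k l)))%N.
Proof. by elim: cs => [|c cs IH] //=; rewrite IH mulnDl. Qed.

Lemma stackmx_map_cons k cs i l :
  (stackmx W [seq k :: c | c <- cs] i l :=:
   castcols (Dim i l) (stackmx W cs (cv i l k) (drop k l) *t row_base (W i (take k l))))%MS.
Proof.
elim: cs => [|c cs IH] /=.
  by rewrite tens0mx castcols0; apply/eqmxP; rewrite !sub0mx.
set b0 := blocksmx W c _ _; set S0 := stackmx W cs _ _.
apply/eqmxP/andP; split.
  rewrite -addsmxE addsmx_sub IH.
  by apply/andP; split; apply/castcolsS/tensmxS; rewrite // -addsmxE ?addsmxSl ?addsmxSr.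
have sCS : (col_mx b0 S0 <= b0 + S0)%MS by rewrite -addsmxE.
apply: submx_trans (castcolsS _ (tensmxS sCS (submx_refl _))) _.
apply: submx_trans (castcolsS _ (tensmx_addsl _ _ _)) _.
apply: submx_trans (castcols_adds _ _ _) _.
by rewrite -addsmxE; apply: addsmxS; rewrite ?IH.
Qed.

Lemma stackmx_comps_nil i :
  row_free (stackmx W (comps 0) i [::]) /\ (stackmx W (comps 0) i [::] :=: VG i [::])%MS.
Proof.
rewrite /= castcols_id.
have rk1 : \rank (col_mx (1%:M : 'M[F]_1) (0 : 'M_(0, 1))) = 1%N.
  by rewrite -addsmxE addsmx0 mxrank1.
split; first by rewrite /row_free rk1.
by apply/eqmxP/andP; split; apply: submx_full; rewrite ?row_full_fixmx_nil // /row_full rk1.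
Qed.

Lemma stackmx_first_part i l k : (k <= size l)%N ->
  let S := stackmx W (comps (size l - k)) (cv i l k) (drop k l) in
  row_free S -> (S :=: VG (cv i l k) (drop k l))%MS ->
  (stackmx W [seq k :: c | c <- comps (size l - k)] i l :=: fixW i l k)%MS /\
  rs W [seq k :: c | c <- comps (size l - k)] i l = \rank (fixW i l k).
Proof.
move=> lkl S freeS eqS.
have eqT : (castcols (Dim i l) (S *t row_base (W i (take k l))) :=: fixW i l k)%MS.
  by apply/eqmxP/andP; split; apply/castcolsS/tensmxS; rewrite ?eqS ?eq_row_base.
split; first exact: eqmx_trans (stackmx_map_cons _ _ _ _) eqT.
have : row_free (castcols (Dim i l) (S *t row_base (W i (take k l)))).
  by rewrite row_free_castcols ?Dim_take_drop // row_free_tensmx ?row_base_free.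
by rewrite -eqT rs_map_cons /row_free => /eqP ->.
Qed.

Lemma stackmx_comps i l : sub i l ->
  row_free (stackmx W (comps (size l)) i l) /\ (stackmx W (comps (size l)) i l :=: VG i l)%MS.
Proof.
move=> sil; have [n] := ubnP (size l); elim: n i l sil => // n IH i l sil ltln.
have [/size0nil -> | lt0l] := posnP (size l); first exact: stackmx_comps_nil.
have part k : (0 < k)%N -> (k <= size l)%N ->
    (stackmx W [seq k :: c | c <- comps (size l - k)] i l :=: fixW i l k)%MS /\
    rs W [seq k :: c | c <- comps (size l - k)] i l = \rank (fixW i l k).
  move=> lt0k lkl; have [] // := IH (cv i l k) (drop k l) (subpath_drop sil lkl).
    by rewrite size_drop; lia.
  by rewrite size_drop; apply: stackmx_first_part.
have defc : comps (size l) =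
    flatten [seq [seq k :: c | c <- comps (size l - k)] | k <- index_iota 1 (size l).+1].
  by move: lt0l; rewrite /index_iota subn1; case: (size l) => // m _; rewrite compsS.
have eqSW : (stackmx W (comps (size l)) i l :=: fixWs i l (size l).+1)%MS.
  rewrite defc; apply: eqmx_trans (stackmx_flatten _ _ _ _) _.
  apply/eqmxP/andP; split; apply/sumsmx_seq_subP => k kl; apply: (sumsmx_seq_sup k kl);
    move: kl; rewrite mem_index_iota => /andP[lt0k lkl];
    by have [eqB _] := part k lt0k lkl; rewrite !genmxE eqB.
split; last exact: eqmx_trans eqSW (fixWs_full sil lt0l).
rewrite /row_free eqSW (mxrank_fixWs sil (leqnn _)) defc rs_flatten.
apply/eqP/esym/eq_big_seq => k; rewrite mem_index_iota => /andP[lt0k lkl].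
by have [_ ->] := part k lt0k lkl.
Qed.

End IrreducibleInvariants.

Theorem mainTheorem3 (F : fieldType) (Q0 : Type) (na : Q0 -> Q0 -> nat)
  (G : arrow_family F na -> Prop) (HG : is_group G)
  (i0 : Q0) (l0 : seq Q0) (Hpath : is_arrow_path na i0 l0) (Hm : (0 < size l0)%N)
  (W : forall (i : Q0) (l : seq Q0), 'M[F]_(Dim na i l))
  (HW : forall (i : Q0) (l : seq Q0),
          subpath i l i0 l0 -> (0 < size l)%N -> irr_space G W i l) :
  psi_bijective G W i0 l0.
Proof.
have [freeS eqS] := stackmx_comps HW (subpath_refl i0 l0).
exact: row_free_mulmx_bij freeS eqS.
Qed.
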